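(* For every $\beta\in[\frac12,1)$ and every integer $k\ge2$, $$Q^{-1}(k,\beta)\le\frac{k}{k+1}\,Q^{-1}(k+1,\beta).$$
   Context: For an integer $k\ge1$ and $\lambda\ge0$, $Q(k,\lambda)=\Gamma(k,\lambda)/\Gamma(k)=\mathbb{P}(\operatorname{Poi}(\lambda)\le k-1)$ (regularized upper incomplete gamma function); $Q(k,\cdot)$ decreases strictly from $1$ to $0$, and for $\beta\in(0,1)$, $Q^{-1}(k,\beta)$ is the unique $\lambda>0$ with $Q(k,\lambda)=\beta$. *)

From Stdlib Require Import Arith Reals Lra ClassicalEpsilon.
Open Scope R_scope.

(* Q(k, lam) = P(Poi(lam) <= k-1) = sum_{j=0}^{k-1} e^{-lam} lam^j / j!
   (the regularized upper incomplete gamma function Gamma(k,lam)/Gamma(k),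
   for integer k >= 1). *)
Fixpoint Qsum (k : nat) (lam : R) : R :=
  match k with
  | O => 0
  | S j => Qsum j lam + lam ^ j / INR (fact j)
  end.

Definition Q (k : nat) (lam : R) : R := exp (- lam) * Qsum k lam.

Definition Qinv (k : nat) (beta : R) : R :=
  epsilon (inhabits 0) (fun lam => 0 < lam /\ Q k lam = beta).

(* Write K = k, K1 = k+1, x = Qinv K beta, y = Qinv K1 beta and t = x / K.  Since
   Q K1 is decreasing and Q K1 y = beta = Q K (K t), the claim K t <= (K/K1) y,
   i.e. K1 t <= y, follows from the comparison
       rescaled_gap t := Q K1 (K1 t) - Q K (K t) >= 0      for t in [0, 1],
   and t <= 1 holds because of the median bound Q K K <= 1/2 <= beta.

   The derivative of rescaled_gap is  A(t) (1 - c t e^{-t})  with A >= 0 and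
   t e^{-t} increasing on [0,1], so rescaled_gap is unimodal and it suffices to
   check the endpoints: rescaled_gap 0 = 0 and rescaled_gap 1 >= 0, which is the
   diagonal monotonicity  Q K K <= Q K1 K1. *)

From Stdlib Require Import Arith Reals Lra Lia Psatz ClassicalEpsilon.
From Coquelicot Require Import Coquelicot.
Open Scope R_scope.

Lemma deriv_nonneg_le (f df : R -> R) (a b : R) :
  a <= b ->
  (forall x, a <= x <= b -> is_derive f x (df x)) ->
  (forall x, a <= x <= b -> 0 <= df x) ->
  f a <= f b.
Proof.
  intros Hab Hder Hpos.
  destruct (MVT_gen f a b df) as [c [Hc Hmvt]];
    rewrite ?Rmin_left, ?Rmax_right in * by lra.
  - intros x Hx; apply Hder; lra.
  - intros x Hx; apply continuity_pt_filterlim, (ex_derive_continuous f x).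
    exists (df x); apply Hder; lra.
  - assert (0 <= df c * (b - a)) by (apply Rmult_le_pos; [apply Hpos|]; lra).
    lra.
Qed.

Definition pois (n : nat) (x : R) : R := exp (- x) * (x ^ n / INR (fact n)).

Lemma pois_nonneg n x : 0 <= x -> 0 <= pois n x.
Proof.
  intros Hx; unfold pois; pose proof (INR_fact_lt_0 n); pose proof (exp_pos (- x)).
  apply Rmult_le_pos; [lra|]; apply Rdiv_le_0_compat; [apply pow_le|]; lra.
Qed.

Lemma pois_pos n x : 0 < x -> 0 < pois n x.
Proof.
  intros Hx; unfold pois; pose proof (INR_fact_lt_0 n).
  apply Rmult_lt_0_compat; [apply exp_pos|]; apply Rdiv_lt_0_compat; [apply pow_lt|]; lra.
Qed.

Lemma Q_succ n x : Q (S n) x = Q n x + pois n x.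
Proof. unfold Q, pois; simpl; ring. Qed.

Lemma Q_at_0 n : Q (S n) 0 = 1.
Proof.
  unfold Q; rewrite Ropp_0, exp_0, Rmult_1_l.
  induction n as [|n IH]; simpl in *; [field|].
  rewrite IH, Rmult_0_l; unfold Rdiv; ring.
Qed.

Lemma exp_term_deriv n x :
  is_derive (fun t => t ^ S n / INR (fact (S n))) x (x ^ n / INR (fact n)).
Proof.
  pose proof (INR_fact_lt_0 n); pose proof (INR_fact_lt_0 (S n)).
  pose proof (lt_0_INR (S n) (Nat.lt_0_succ n)).
  auto_derive; [lra|].
  change (INR (fact n + n * fact n)) with (INR (fact (S n))).
  change (match n with 0%nat => 1 | S _ => INR n + 1 end) with (INR (S n)).
  rewrite fact_simpl, mult_INR; field; lra.
Qed.

Lemma Qsum_deriv n x : is_derive (Qsum (S n)) x (Qsum n x).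
Proof.
  induction n as [|n IH].
  - apply (is_derive_ext (fun _ => 1)); [intros t; simpl; field|].
    auto_derive; auto.
  - exact (is_derive_plus (Qsum (S n)) _ x _ _ IH (exp_term_deriv n x)).
Qed.

Lemma Q_deriv n x : is_derive (Q (S n)) x (- pois n x).
Proof.
  unfold Q.
  eapply is_derive_ext; [intros t; reflexivity|].
  replace (- pois n x) with (- exp (- x) * Qsum (S n) x + exp (- x) * Qsum n x)
    by (unfold pois; simpl; ring).
  apply (Derive.is_derive_mult (fun t => exp (- t)) (Qsum (S n)));
    [auto_derive; auto; ring | apply Qsum_deriv].
Qed.

Lemma Q_continuous n x : continuity_pt (Q (S n)) x.
Proof.
  apply continuity_pt_filterlim, (ex_derive_continuous (Q (S n)) x).
  exists (- pois n x); apply Q_deriv.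
Qed.

Lemma Q_decreasing n a b : 0 < a < b -> Q (S n) b < Q (S n) a.
Proof.
  intros Hab.
  apply Ropp_lt_cancel.
  apply (incr_function_le (fun x => - Q (S n) x) a b (pois n)); simpl; try lra.
  - intros x _ _.
    replace (pois n x) with (opp (- pois n x)) by (unfold opp; simpl; ring).
    exact (is_derive_opp (Q (S n)) x _ (Q_deriv n x)).
  - intros x Hx _; apply pois_pos; lra.
Qed.

Lemma Qsum_le_exp n x : 0 <= x -> Qsum n x <= exp x.
Proof.
  revert x; induction n as [|n IH]; intros x Hx.
  - simpl; left; apply exp_pos.
  - assert (H : exp 0 - Qsum (S n) 0 <= exp x - Qsum (S n) x).
    { apply (deriv_nonneg_le (fun t => exp t - Qsum (S n) t) (fun t => exp t - Qsum n t));
        [lra| |intros t Ht; specialize (IH t ltac:(lra)); lra].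
      intros t _; apply (is_derive_minus exp (Qsum (S n))); [apply is_derive_exp | apply Qsum_deriv]. }
    pose proof (Q_at_0 n) as H0; unfold Q in H0; rewrite Ropp_0, exp_0, Rmult_1_l in H0.
    rewrite exp_0, H0 in H; lra.
Qed.

(* The 2m+1 factors n-m, ..., n+m of (n+m)!/(n-1-m)! pair up as (n-j)(n+j) <= n^2. *)
Lemma fact_window n m :
  (m < n)%nat -> (fact (n + m) <= n ^ (2 * m + 1) * fact (n - 1 - m))%nat.
Proof.
  induction m as [|m IH]; intros Hm.
  - destruct n as [|n]; [lia|].
    replace (S n + 0)%nat with (S n) by lia; replace (S n - 1 - 0)%nat with n by lia.
    rewrite fact_simpl; simpl; lia.
  - specialize (IH ltac:(lia)).
    replace (n + S m)%nat with (S (n + m)) by lia.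
    replace (n - 1 - m)%nat with (S (n - 1 - S m)) in IH by lia.
    rewrite fact_simpl in *.
    replace (2 * S m + 1)%nat with (2 + (2 * m + 1))%nat by lia.
    rewrite Nat.pow_add_r.
    assert (S (n + m) * S (n - 1 - S m) <= n ^ 2)%nat by (simpl; nia).
    nia.
Qed.

(* At x = n, the Poisson weights mirrored around n - 1/2 increase:
   pois (n-1-m) n <= pois (n+m) n. *)
Lemma exp_term_mirror n m : (m < n)%nat ->
  INR n ^ (n - 1 - m) / INR (fact (n - 1 - m)) <= INR n ^ (n + m) / INR (fact (n + m)).
Proof.
  intros Hm.
  pose proof (le_INR _ _ (fact_window n m Hm)) as Hf; rewrite mult_INR, pow_INR in Hf.
  pose proof (INR_fact_lt_0 (n - 1 - m)); pose proof (INR_fact_lt_0 (n + m)).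
  assert (0 <= INR n ^ (n - 1 - m)) by (apply pow_le, pos_INR).
  replace (n + m)%nat with ((n - 1 - m) + (2 * m + 1))%nat at 1 by lia.
  rewrite pow_add.
  apply Rmult_le_reg_r with (INR (fact (n - 1 - m)) * INR (fact (n + m))); [nra|].
  unfold Rdiv; field_simplify; [|lra|lra].
  rewrite Rmult_assoc; apply Rmult_le_compat_l; lra.
Qed.

Lemma Qsum_mirror n m : (m <= n)%nat ->
  Qsum n (INR n) - Qsum (n - m) (INR n) <= Qsum (n + m) (INR n) - Qsum n (INR n).
Proof.
  induction m as [|m IH]; intros Hm.
  - rewrite Nat.sub_0_r, Nat.add_0_r; lra.
  - specialize (IH ltac:(lia)).
    replace (n - m)%nat with (S (n - S m)) in IH by lia.
    replace (n + S m)%nat with (S (n + m)) by lia.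
    pose proof (exp_term_mirror n m ltac:(lia)) as Hterm.
    replace (n - 1 - m)%nat with (n - S m)%nat in Hterm by lia.
    simpl in IH |- *; lra.
Qed.

Lemma Q_diag_le_half n : Q n (INR n) <= 1 / 2.
Proof.
  pose proof (Qsum_mirror n n (Nat.le_refl n)) as Hmirror.
  rewrite Nat.sub_diag in Hmirror; simpl Qsum at 2 in Hmirror.
  pose proof (Qsum_le_exp (n + n) (INR n) (pos_INR n)).
  assert (Hinv : exp (- INR n) * exp (INR n) = 1)
    by (rewrite <- exp_plus, Rplus_opp_l; apply exp_0).
  pose proof (exp_pos (- INR n)).
  unfold Q; nra.
Qed.

Lemma ln_1_plus_lower y : 0 <= y -> 2 * y / (2 + y) <= ln (1 + y).
Proof.
  intros Hy.
  assert (H : ln (1 + 0) - 2 * 0 / (2 + 0) <= ln (1 + y) - 2 * y / (2 + y)).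
  { apply (deriv_nonneg_le (fun t => ln (1 + t) - 2 * t / (2 + t))
                           (fun t => t ^ 2 / ((1 + t) * (2 + t) ^ 2))); [lra| |].
    - intros t Ht; auto_derive; [repeat split; lra|]; field; lra.
    - intros t Ht; apply Rdiv_le_0_compat; [nra|].
      apply Rmult_lt_0_compat; [|apply pow_lt]; lra. }
  rewrite Rplus_0_r, ln_1 in H; unfold Rdiv in H; lra.
Qed.

Lemma one_minus_exp_neg_upper y : 0 <= y -> 1 - exp (- y) <= 2 * y / (2 + y).
Proof.
  intros Hy.
  assert (H : exp (- 0) * (2 + 0) - (2 - 0) <= exp (- y) * (2 + y) - (2 - y)).
  { apply (deriv_nonneg_le (fun t => exp (- t) * (2 + t) - (2 - t))
                           (fun t => 1 - exp (- t) * (1 + t))); [lra| |].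
    - intros t Ht; auto_derive; [auto|ring].
    - intros t Ht; pose proof (exp_ineq1_le t); pose proof (exp_pos (- t)).
      assert (exp (- t) * exp t = 1) by (rewrite <- exp_plus, Rplus_opp_l; apply exp_0).
      nra. }
  rewrite Ropp_0, exp_0 in H.
  apply (Rmult_le_reg_r (2 + y)); [lra|]; unfold Rdiv; field_simplify; lra.
Qed.

(* For k = n >= 1: k (1 - e^{-1/k}) <= (1 + 1/k)^n / e.  With y = 1/k and
   z = 2/(2+y) the left side is at most z, and z <= e^{z-1} <= (1+y)^n / e. *)
Lemma exp_gap_bound n : (0 < n)%nat ->
  INR n * (1 - exp (- (1 / INR n))) <= (1 + 1 / INR n) ^ n * exp (- 1).
Proof.
  intros Hn.
  set (k := INR n); assert (Hk : 0 < k) by (apply lt_0_INR; lia).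
  set (y := 1 / k); assert (Hy : 0 < y) by (apply Rdiv_lt_0_compat; lra).
  set (z := 2 / (2 + y)).
  assert (Hgap : k * (1 - exp (- y)) <= z).
  { pose proof (one_minus_exp_neg_upper y ltac:(lra)).
    replace z with (k * (2 * y / (2 + y))) by (unfold z, y; field; lra).
    apply Rmult_le_compat_l; lra. }
  assert (Hln : z <= ln ((1 + y) ^ n)).
  { rewrite ln_pow by lra; pose proof (ln_1_plus_lower y ltac:(lra)).
    fold k; replace z with (k * (2 * y / (2 + y))) by (unfold z, y; field; lra).
    apply Rmult_le_compat_l; [apply pos_INR | lra]. }
  assert (Hpow : exp z <= (1 + y) ^ n).
  { rewrite <- (exp_ln ((1 + y) ^ n)) by (apply pow_lt; lra).
    destruct (Rle_lt_or_eq_dec _ _ Hln) as [Hlt | ->];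
      [left; apply exp_increasing | right]; easy. }
  pose proof (exp_ineq1_le (z - 1)) as Hz.
  assert (exp (z - 1) = exp z * exp (- 1)) by (rewrite <- exp_plus; reflexivity).
  pose proof (exp_pos (- 1)).
  fold k y; nra.
Qed.

Lemma pow_1_plus_le_exp n u : 0 <= u -> (1 + u) ^ n <= exp (INR n * u).
Proof.
  intros Hu; induction n as [|n IH].
  - simpl; rewrite Rmult_0_l, exp_0; lra.
  - rewrite S_INR, Rmult_plus_distr_r, Rmult_1_l, exp_plus; simpl.
    rewrite (Rmult_comm (exp _)).
    apply Rmult_le_compat; [lra | apply pow_le; lra | apply exp_ineq1_le | exact IH].
Qed.

(* Moving the argument right of k = N+1 by x costs at least a factor e^{-x/k}
   in the Poisson weight of index N, since (1 + x/k)^N <= e^{N x / k}. *)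
Lemma pois_shift_bound N x : 0 <= x ->
  pois N (INR (S N) + x) <= pois N (INR (S N)) * exp (- (x / INR (S N))).
Proof.
  intros Hx; set (k := INR (S N)).
  assert (Hk : 0 < k) by (apply lt_0_INR; lia).
  assert (HN : INR N = k - 1) by (unfold k; rewrite S_INR; ring).
  assert (Hpow : (1 + x / k) ^ N <= exp (INR N * (x / k)))
    by (apply pow_1_plus_le_exp, Rdiv_le_0_compat; lra).
  assert (Hexp : exp (- (k + x)) * exp (INR N * (x / k)) = exp (- k) * exp (- (x / k)))
    by (rewrite <- !exp_plus, HN; f_equal; field; lra).
  assert (Hfactor : (k + x) ^ N = k ^ N * (1 + x / k) ^ N)
    by (rewrite <- Rpow_mult_distr; f_equal; field; lra).
  replace (pois N (k + x)) with
      (exp (- (k + x)) * k ^ N * (1 + x / k) ^ N / INR (fact N))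
    by (unfold pois; rewrite Hfactor; field; apply INR_fact_neq_0).
  replace (pois N k * exp (- (x / k))) with
      (exp (- (k + x)) * k ^ N * exp (INR N * (x / k)) / INR (fact N))
    by (rewrite Rmult_assoc, (Rmult_comm (k ^ N)), <- Rmult_assoc, Hexp;
        unfold pois; field; apply INR_fact_neq_0).
  pose proof (INR_fact_lt_0 N); pose proof (exp_pos (- (k + x))).
  assert (0 <= k ^ N) by (apply pow_le; lra).
  apply Rmult_le_compat_r; [left; apply Rinv_0_lt_compat; lra|].
  apply Rmult_le_compat_l; nra.
Qed.

(* Integrating the previous bound over [k, k+1]:
   P(Poi(k) <= N) - P(Poi(k+1) <= N) <= pois N k * k * (1 - e^{-1/k}). *)
Lemma Q_drop_bound N :
  Q (S N) (INR (S N)) - Q (S N) (INR (S N) + 1) <=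
  pois N (INR (S N)) * INR (S N) * (1 - exp (- (1 / INR (S N)))).
Proof.
  set (k := INR (S N)); set (C := pois N k).
  assert (Hk : 0 < k) by (apply lt_0_INR; lia).
  assert (H : Q (S N) (k + 0) - C * k * exp (- (0 / k)) <=
              Q (S N) (k + 1) - C * k * exp (- (1 / k))).
  { apply (deriv_nonneg_le (fun x => Q (S N) (k + x) - C * k * exp (- (x / k)))
      (fun x => C * exp (- (x / k)) - pois N (k + x))); [lra| |].
    - intros x _.
      replace (C * exp (- (x / k)) - pois N (k + x)) with
          (minus (scal 1 (- pois N (k + x))) (- (C * exp (- (x / k)))))
        by (unfold minus, plus, opp, scal; simpl; unfold mult; simpl; ring).
      apply (is_derive_minus (fun x => Q (S N) (k + x)) (fun x => C * k * exp (- (x / k)))).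
      + apply (is_derive_comp (Q (S N)) (fun x => k + x)); [apply Q_deriv|].
        auto_derive; auto; ring.
      + auto_derive; auto; unfold Rdiv; field; lra.
    - intros x Hx; pose proof (pois_shift_bound N x ltac:(lra)); unfold C, k; lra. }
  replace (0 / k) with 0 in H by (field; lra).
  rewrite Rplus_0_r, Ropp_0, exp_0 in H; lra.
Qed.

Lemma pois_succ_diag N :
  pois (S N) (INR (S N) + 1) =
  pois N (INR (S N)) * (1 + 1 / INR (S N)) ^ S N * exp (- 1).
Proof.
  set (k := INR (S N)); assert (Hk : 0 < k) by (apply lt_0_INR; lia).
  assert (Hfactor : (k + 1) ^ S N = k * k ^ N * (1 + 1 / k) ^ S N)
    by (replace (k + 1) with (k * (1 + 1 / k)) by (field; lra);
        rewrite Rpow_mult_distr; simpl; ring).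
  assert (Hexp : exp (- (k + 1)) = exp (- k) * exp (- 1))
    by (rewrite <- exp_plus; f_equal; ring).
  unfold pois; rewrite fact_simpl, mult_INR, Hfactor, Hexp; fold k.
  field; split; [apply INR_fact_neq_0 | lra].
Qed.

(* P(Poi(k) <= k-1) is nondecreasing along the diagonal:
   the loss Q (S N) k - Q (S N) (k+1) is paid back by the new weight pois (S N) (k+1). *)
Lemma Q_diag_mono N : Q (S N) (INR (S N)) <= Q (S (S N)) (INR (S (S N))).
Proof.
  set (k := INR (S N)).
  assert (Hk1 : INR (S (S N)) = k + 1) by (unfold k; rewrite (S_INR (S N)); ring).
  pose proof (Q_drop_bound N) as Hdrop.
  pose proof (exp_gap_bound (S N) (Nat.lt_0_succ N)) as Hgap.
  pose proof (pois_succ_diag N) as Hnext.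
  pose proof (pois_nonneg N k (pos_INR _)).
  fold k in Hdrop, Hgap, Hnext.
  rewrite Hk1, (Q_succ (S N)), Hnext.
  nra.
Qed.

(* For 1/2 <= beta < 1 the defining property of [Qinv] is satisfiable: by the
   intermediate value theorem [Q (S N)] takes the value beta on (0, N+1], since
   Q (S N) 0 = 1 and Q (S N) (N+1) <= 1/2. *)
Lemma Qinv_spec N beta : 1 / 2 <= beta -> beta < 1 ->
  0 < Qinv (S N) beta /\ Q (S N) (Qinv (S N) beta) = beta.
Proof.
  intros Hlo Hhi; unfold Qinv; apply epsilon_spec.
  set (k := INR (S N)); assert (Hk : 0 < k) by (apply lt_0_INR; lia).
  pose proof (Q_diag_le_half (S N)) as Hhalf; fold k in Hhalf.
  destruct (Rle_lt_or_eq_dec _ _ (Rle_trans _ _ _ Hhalf Hlo)) as [Hlt | Heq];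
    [| now exists k].
  destruct (IVT (fun x => beta - Q (S N) x) 0 k) as [z [Hz Hzero]]; cbv beta.
  - intros x; apply continuity_pt_minus; [apply continuity_pt_const; now intros ? ?|].
    apply Q_continuous.
  - exact Hk.
  - rewrite Q_at_0; lra.
  - lra.
  - exists z; destruct (Req_dec z 0) as [-> | Hz0]; [rewrite Q_at_0 in Hzero|]; lra.
Qed.

(* Single-crossing principle: if h' = A (1 - g) with A >= 0 and g nondecreasing,
   then h' changes sign at most once, from + to -, so h is unimodal on [a, b]
   and bounded below by its smaller endpoint value. *)
Lemma single_crossing_min (h A g : R -> R) (a b : R) :
  (forall x, a <= x <= b -> is_derive h x (A x * (1 - g x))) ->
  (forall x, a <= x <= b -> 0 <= A x) ->
  (forall x y, a <= x -> x <= y -> y <= b -> g x <= g y) ->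
  forall t, a <= t <= b -> Rmin (h a) (h b) <= h t.
Proof.
  intros Hder HA Hg t Ht.
  destruct (Rle_lt_dec (g t) 1) as [Hle | Hgt].
  - apply Rle_trans with (h a); [apply Rmin_l|].
    apply (deriv_nonneg_le h (fun x => A x * (1 - g x))); [lra | |].
    + intros x Hx; apply Hder; lra.
    + intros x Hx; apply Rmult_le_pos; [apply HA; lra|].
      pose proof (Hg x t ltac:(lra) ltac:(lra) ltac:(lra)); lra.
  - apply Rle_trans with (h b); [apply Rmin_r|].
    apply Ropp_le_cancel.
    apply (deriv_nonneg_le (fun x => - h x) (fun x => A x * (g x - 1))); [lra | |].
    + intros x Hx.
      replace (A x * (g x - 1)) with (opp (A x * (1 - g x))) by (unfold opp; simpl; ring).
      exact (is_derive_opp h x _ (Hder x ltac:(lra))).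
    + intros x Hx; apply Rmult_le_pos; [apply HA; lra|].
      pose proof (Hg t x ltac:(lra) ltac:(lra) ltac:(lra)); lra.
Qed.

Lemma t_exp_neg_nondecreasing a b : a <= b -> b <= 1 -> a * exp (- a) <= b * exp (- b).
Proof.
  intros Hab Hb.
  apply (deriv_nonneg_le (fun t => t * exp (- t)) (fun t => (1 - t) * exp (- t))); [lra | |].
  - intros x _; auto_derive; auto; ring.
  - intros x Hx; apply Rmult_le_pos; [lra | left; apply exp_pos].
Qed.

Section Rescaled.

Variable N : nat.
Let K := INR (S N).
Let K1 := INR (S (S N)).

(* Compare P(Poi(K1 t) <= K) with P(Poi(K t) <= K - 1), both arguments
   rescaled so that t = 1 is the diagonal point. *)
Definition rescaled_gap (t : R) : R := Q (S (S N)) (K1 * t) - Q (S N) (K * t).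

Lemma pois_rescaled_ratio t :
  K1 * pois (S N) (K1 * t) =
  K * pois N (K * t) * ((K1 / K) ^ S (S N) * (t * exp (- t))).
Proof.
  assert (HK : 0 < K) by (apply lt_0_INR; lia).
  assert (HK1 : K1 = K + 1) by (unfold K1, K; rewrite (S_INR (S N)); ring).
  assert (Hexp : exp (- (K1 * t)) = exp (- (K * t)) * exp (- t))
    by (rewrite <- exp_plus, HK1; f_equal; ring).
  unfold pois; rewrite Hexp, fact_simpl, mult_INR; fold K.
  rewrite !Rpow_mult_distr; unfold Rdiv; rewrite Rpow_mult_distr, pow_inv.
  assert (K ^ N <> 0) by (apply pow_nonzero; lra).
  pose proof (INR_fact_neq_0 N).
  simpl pow; field; lra.
Qed.

Lemma rescaled_gap_deriv t :
  is_derive rescaled_gap t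
    (K * pois N (K * t) * (1 - (K1 / K) ^ S (S N) * (t * exp (- t)))).
Proof.
  replace (K * pois N (K * t) * (1 - (K1 / K) ^ S (S N) * (t * exp (- t))))
    with (minus (scal K1 (- pois (S N) (K1 * t))) (scal K (- pois N (K * t))))
    by (rewrite Rmult_minus_distr_l, Rmult_1_r, <- pois_rescaled_ratio;
        unfold minus, plus, opp, scal; simpl; unfold mult; simpl; ring).
  apply (is_derive_minus (fun t => Q (S (S N)) (K1 * t)) (fun t => Q (S N) (K * t)));
    [apply (is_derive_comp (Q (S (S N))) (fun t => K1 * t))
    |apply (is_derive_comp (Q (S N)) (fun t => K * t))];
    solve [apply Q_deriv | auto_derive; auto; ring].
Qed.

(* The key comparison: rescaled_gap >= 0 on [0, 1].  It vanishes at 0, is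
   nonnegative at 1 by [Q_diag_mono], and is unimodal in between. *)
Lemma rescaled_gap_nonneg t : 0 <= t <= 1 -> 0 <= rescaled_gap t.
Proof.
  intros Ht.
  assert (HK : 0 < K) by (apply lt_0_INR; lia).
  assert (Hc : 0 <= (K1 / K) ^ S (S N))
    by (apply pow_le, Rdiv_le_0_compat; [apply pos_INR | lra]).
  pose proof (single_crossing_min rescaled_gap (fun s => K * pois N (K * s))
    (fun s => (K1 / K) ^ S (S N) * (s * exp (- s))) 0 1) as Hmin.
  assert (H0 : rescaled_gap 0 = 0)
    by (unfold rescaled_gap; rewrite !Rmult_0_r, !Q_at_0; ring).
  assert (H1 : 0 <= rescaled_gap 1)
    by (unfold rescaled_gap, K, K1; rewrite !Rmult_1_r; pose proof (Q_diag_mono N); lra).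
  apply Rle_trans with (Rmin (rescaled_gap 0) (rescaled_gap 1));
    [apply Rmin_glb; lra | apply Hmin; auto].
  - intros s _; apply rescaled_gap_deriv.
  - intros s Hs; apply Rmult_le_pos; [lra | apply pois_nonneg; nra].
  - intros x y Hx Hxy Hy; apply Rmult_le_compat_l; [exact Hc|].
    apply t_exp_neg_nondecreasing; lra.
Qed.

End Rescaled.

Theorem lemma10 (beta : R) (k : nat) :
  1 / 2 <= beta -> beta < 1 -> (2 <= k)%nat ->
  Qinv k beta <= INR k / INR (k + 1) * Qinv (k + 1) beta.
Proof.
  intros Hlo Hhi Hk.
  destruct k as [|N]; [lia|]; rewrite Nat.add_1_r.
  destruct (Qinv_spec N beta Hlo Hhi) as [Hx Ex].
  destruct (Qinv_spec (S N) beta Hlo Hhi) as [Hy Ey].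
  set (x := Qinv (S N) beta) in *; set (y := Qinv (S (S N)) beta) in *.
  set (K := INR (S N)); set (K1 := INR (S (S N))).
  assert (HK : 0 < K) by (apply lt_0_INR; lia).
  assert (HK1 : K1 = K + 1) by (unfold K1, K; rewrite (S_INR (S N)); ring).
  (* x <= K, since Q (S N) K <= 1/2 <= beta and Q (S N) is decreasing. *)
  assert (Hxk : x <= K).
  { destruct (Rle_lt_dec x K) as [| Hlt]; [easy|].
    pose proof (Q_decreasing N K x (conj HK Hlt)).
    pose proof (Q_diag_le_half (S N)) as Hhalf; fold K in Hhalf; lra. }
  set (t := x / K).
  assert (Hgap : 0 <= rescaled_gap N t).
  { apply rescaled_gap_nonneg; unfold t; split.
    - apply Rdiv_le_0_compat; lra.
    - apply (Rmult_le_reg_r K); [lra|]; replace (x / K * K) with x by (field; lra); lra. }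
  unfold rescaled_gap in Hgap; fold K K1 in Hgap.
  replace (K * t) with x in Hgap by (unfold t; field; lra).
  (* Q (S (S N)) (K1 t) >= beta = Q (S (S N)) y forces K1 t <= y. *)
  assert (Hty : K1 * t <= y).
  { destruct (Rle_lt_dec (K1 * t) y) as [| Hlt]; [easy|].
    pose proof (Q_decreasing (S N) y (K1 * t) (conj Hy Hlt)); lra. }
  replace x with (K / K1 * (K1 * t)) by (unfold t; field; lra).
  apply Rmult_le_compat_l; [apply Rdiv_le_0_compat|]; lra.
Qed.
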